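(* Let $A \subset \mathbb{Z}$ be a finite set with $\min A = 0$, $\max A = b$, and $\gcd A = 1$. Let $\mathcal{C}_A = \{\sum_{a \in A} n_a (a,1) : n_a \in \mathbb{N}\} \subset \mathbb{Z}^2$, $\Lambda = \{(bn, m+n) : m,n \in \mathbb{Z}\}$, and $\Lambda^+ = \{(bn, m+n) : m,n \in \mathbb{N}\}$. For $a \in \{0,\ldots,b-1\}$ let $\mathcal{S}_a$ be the set of points of $\mathcal{C}_A$ congruent to $(a,1)$ modulo $\Lambda$, and let $(g_a,h_a) \in \mathbb{N}^2$ be the unique point such that $\mathcal{S}_a \subseteq (g_a,h_a) + \Lambda^+$ and $((g_a,h_a) + \Lambda^+) \setminus \mathcal{S}_a$ is finite. Let $T_0(A) = \bigcup_{h \geq 0} hA$. Then \[ T_0(A) = \bigcup_{a=0}^{b-1} \big( g_a + b\cdot\mathbb{N} \big), \] where $b\cdot\mathbb{N} = \{0, b, 2b, \ldots\}$.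
   Context: $\mathbb{N} = \{0,1,2,\ldots\}$; $hA = \{a_1 + \cdots + a_h : a_i \in A\}$ with $0A = \{0\}$. The existence and uniqueness of $(g_a,h_a)$ as described is part of the setting (it is proved in the paper). *)

From mathcomp Require Import all_boot all_order all_algebra.
Set Implicit Arguments. Unset Strict Implicit. Unset Printing Implicit Defensive.
Import Order.TTheory GRing.Theory Num.Theory.
Local Open Scope ring_scope.

(* A finite set A of integers is represented by a sequence (duplicates are
   irrelevant: membership is what matters; sums over A use [undup A]). *)

Definition in_hA (A : seq int) (h : nat) (x : int) : Prop :=
  exists s : seq int, size s = h /\ all (fun a => a \in A) s /\
                      x = \sum_(a <- s) a.

Definition inT0 (A : seq int) (x : int) : Prop := exists h : nat, in_hA A h x.

Definition inCA (A : seq int) (p : int * int) : Prop :=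
  exists n : int -> nat,
    p = (\sum_(a <- undup A) (n a)%:Z * a, \sum_(a <- undup A) (n a)%:Z).

Definition inLam (b : int) (p : int * int) : Prop :=
  exists m n : int, p = (b * n, m + n).

Definition inLamPlus (b : int) (p : int * int) : Prop :=
  exists m n : nat, p = (b * n%:Z, m%:Z + n%:Z).

Definition inS (A : seq int) (b a : int) (p : int * int) : Prop :=
  inCA A p /\ inLam b (p.1 - a, p.2 - 1).

Definition is_gh (A : seq int) (b a : int) (g h : nat) : Prop :=
  (forall p, inS A b a p -> inLamPlus b (p.1 - g%:Z, p.2 - h%:Z)) /\
  (exists F : seq (int * int), forall p,
      inLamPlus b (p.1 - g%:Z, p.2 - h%:Z) -> ~ inS A b a p -> p \in F).

From mathcomp Require Import all_boot all_order all_algebra.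
From Stdlib Require Import Classical_Prop.
From mathcomp Require Import zify.
Set Implicit Arguments. Unset Strict Implicit. Unset Printing Implicit Defensive.
Import Order.TTheory GRing.Theory Num.Theory.
Local Open Scope ring_scope.

(* A sum of h elements of A, read with multiplicities, is a point (x, h) of
   C_A, and it lies in S_(x mod b); hence x >= g_a with x = g_a (mod b).
   Conversely, ((g_a, h_a) + Lambda^+) \ S_a is finite, so some (g_a, h_a + k)
   lies in S_a, which puts g_a in T_0(A); adding copies of b in A gives the
   whole progression g_a + bN. *)

Lemma sumr_undup_count (V : nmodType) (I : eqType) (r s : seq I) (F : I -> V) :
  {subset s <= r} -> \sum_(i <- undup r) F i *+ count_mem i s = \sum_(i <- s) F i.
Proof.
elim: s => [|y s IHs] sr; first by rewrite big_nil big1 // => i _; rewrite mulr0n.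
rewrite big_cons -IHs => [|i si]; last by apply: sr; rewrite inE si orbT.
under eq_bigr do rewrite /= mulrnDr.
rewrite big_split /= (bigD1_seq y) ?mem_undup ?undup_uniq ?sr ?mem_head //=.
rewrite eqxx big1 ?addr0 // => i /negbTE; rewrite eq_sym => ->.
exact: mulr0n.
Qed.

Lemma injective_notin_seq (T : eqType) (f : nat -> T) (F : seq T) :
  injective f -> exists k, f k \notin F.
Proof.
move=> f_inj; set s := map f (iota 0 (size F).+1).
have /allPn[_ /mapP[k _ ->] fkF] : ~~ all (mem F) s.
  apply: contraL (leqnn (size s)) => /allP sF; rewrite -ltnNge.
  apply: leq_ltn_trans (uniq_leq_size _ sF) _.
    by rewrite map_inj_uniq ?iota_uniq.
  by rewrite size_map size_iota.
by exists k.
Qed.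

Lemma gcdz_big_eq0 (A : seq int) :
  (forall a, a \in A -> a = 0) -> \big[gcdz/0]_(a <- A) a = 0.
Proof.
move=> A0; rewrite big_seq.
by apply: (big_ind (fun x => x = 0)) => // x y -> ->.
Qed.

Section SumSet.

Variable A : seq int.

Lemma inT0_0 : inT0 A 0.
Proof. by exists 0%N, [::]; rewrite big_nil. Qed.

Lemma inT0D x y : inT0 A x -> inT0 A y -> inT0 A (x + y).
Proof.
move=> [_ [s [_ [sA ->]]]] [_ [t [_ [tA ->]]]].
by exists (size (s ++ t)), (s ++ t); rewrite all_cat sA tA big_cat.
Qed.

Lemma inT0_mem a : a \in A -> inT0 A a.
Proof. by move=> aA; exists 1%N, [:: a]; rewrite /= aA big_seq1. Qed.

Lemma inT0_mulrn a k : a \in A -> inT0 A (a *+ k).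
Proof.
move=> aA; elim: k => [|k IHk]; first exact: inT0_0.
by rewrite mulrS; apply: inT0D => //; apply: inT0_mem.
Qed.

Lemma inT0_ge0 x : (forall a, a \in A -> 0 <= a) -> inT0 A x -> 0 <= x.
Proof.
move=> A_ge0 [_ [s [_ [sA ->]]]].
by rewrite big_seq; apply: sumr_ge0 => a /(allP sA)/A_ge0.
Qed.

Lemma inCA_inT0 p : inCA A p -> inT0 A p.1.
Proof.
move=> [n ->] /=; rewrite big_seq.
apply: (big_ind (inT0 A)) => [|x y|a]; [exact: inT0_0 | exact: inT0D |].
by rewrite mem_undup -natz mulr_natl => /inT0_mulrn.
Qed.

Lemma in_hA_inCA h x : in_hA A h x -> inCA A (x, h%:Z).
Proof.
move=> [s [<- [/allP sA ->]]]; exists (fun a => count_mem a s).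
have sumE (F : int -> int) :
    \sum_(a <- undup A) (count_mem a s)%:Z * F a = \sum_(a <- s) F a.
  by rewrite -(sumr_undup_count F sA); apply: eq_bigr => a _; rewrite -natz mulr_natl.
congr (_, _); first by rewrite sumE.
rewrite -sum1_size -natz natr_sum -sumE.
by apply: eq_bigr => a _; rewrite mulr1.
Qed.

Lemma in_hA_inS (b h x : nat) : in_hA A h x%:Z -> inS A b (x %% b)%N (x%:Z, h%:Z).
Proof.
move=> hAx; split; first exact: in_hA_inCA.
exists (h%:Z - 1 - (x %/ b)%N%:Z), (x %/ b)%N%:Z.
by rewrite /= {1}(divn_eq x b); congr (_, _); lia.
Qed.

Lemma is_gh_inT0 b a g h : is_gh A b a g h -> inT0 A g%:Z.
Proof.
move=> [_ [F notS_F]].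
have f_inj : injective (fun k : nat => (g%:Z, h%:Z + k%:Z)) by move=> k l [] /eqP; lia.
have [k kF] := injective_notin_seq F f_inj.
have [Sk _] : inS A b a (g%:Z, h%:Z + k%:Z).
  apply: NNPP => notSk; move: kF; rewrite notS_F //.
  by exists k, 0%N; rewrite /= subrr mulr0 addr0 addrC addKr.
exact: inCA_inT0 Sk.
Qed.

End SumSet.

Lemma inLamPlus_fst (b : int) (g h : nat) p :
  inLamPlus b (p.1 - g%:Z, p.2 - h%:Z) -> exists k : nat, p.1 = g%:Z + b * k%:Z.
Proof. by move=> [_ [k [E _]]]; exists k; rewrite -E addrC subrK. Qed.

Theorem proposition5p4 (A : seq int) (b : nat)
  (g h : nat -> nat)
  (A0 : 0 \in A) (Ab : b%:Z \in A)
  (Abnd : forall a, a \in A -> 0 <= a <= b%:Z)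
  (Agcd : \big[gcdz/0]_(a <- A) a = 1)
  (Hgh : forall a : nat, (a < b)%N -> is_gh A b%:Z a%:Z (g a) (h a)) :
  forall x : int, inT0 A x <->
    exists a : nat, (a < b)%N /\ exists k : nat, x = (g a)%:Z + b%:Z * k%:Z.
Proof.
have b_gt0 : (0 < b)%N.
  case: b Abnd Agcd {Ab Hgh} => // Abnd; rewrite gcdz_big_eq0 // => a /Abnd.
  by rewrite -eq_le => /eqP.
have A_ge0 a : a \in A -> 0 <= a by case/Abnd/andP.
move=> x; split=> [T0x | [a [ab [k ->]]]].
- have /gez0_abs xE := inT0_ge0 A_ge0 T0x.
  have [hx hAx] := T0x; rewrite -xE in hAx.
  have ab : (`|x| %% b < b)%N by rewrite ltn_pmod.
  have [S_sub_Lam _] := Hgh _ ab.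
  have [k kE] := inLamPlus_fst (S_sub_Lam _ (in_hA_inS b hAx)).
  by exists (`|x| %% b)%N; split => //; exists k; rewrite -xE.
- apply: inT0D; first exact: is_gh_inT0 (Hgh a ab).
  by rewrite -[k%:Z]natz mulr_natr; apply: inT0_mulrn Ab.
Qed.
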